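(* Assume the setting below, and assume additionally that there is a constant $\Lambda\ge0$ with $\overline{L}^{(m)}_n\le\Lambda$ for all $m\ge m_0$, all $n\ge0$ and all initial values $x_0\in D$. Then for every $p\in\mathbb{Z}$ there exist constants $C_1,C_2\ge0$ (depending only on $D$, $K$, $m_0$, $\Lambda$ and $p$) such that $m_{min}(x_0,N,p)$ is finite and $$m_{min}(x_0,N,p)\le C_1N+C_2$$ for all $N\in\mathbb{N}$ and all $x_0\in D$.
   Context: Setting. $D\subset\mathbb{R}$ is a compact interval with $0\notin D$, and $f:D\to D$ is continuous on $D$, continuously differentiable on $\operatorname{int}D$, with $f'$ bounded on $\operatorname{int}D$. Fix $K>0$ and an integer $m_0\ge1$ with $K2^{-m_0}<1$, and put $\delta_m:=\frac{K2^{-m}}{1-K2^{-m}}$ for integers $m\ge m_0$. For an initial value $x_0\in D$ let $x_n:=f^n(x_0)$. For each integer $m\ge m_0$ (the mantissa length) a computed orbit is given: sequences $(\hat{x}^{(m)}_n)_{n\ge0}\subset D$, $(\overline{e}^{(m)}_n)_{n\ge0}$ and numbers $\overline{L}^{(m)}_n\ge0$ with $\overline{e}^{(m)}_0=\delta_m|\hat{x}^{(m)}_0|$ and $\overline{e}^{(m)}_{n+1}=\overline{L}^{(m)}_n\overline{e}^{(m)}_n+\delta_m|\hat{x}^{(m)}_{n+1}|$. For $N\in\mathbb{N}$ and $p\in\mathbb{Z}$, the minimal mantissa length $m_{min}(x_0,N,p)$ is the least integer $m\ge m_0$ such that $\overline{e}^{(m)}_n\le\frac{10^{-p}}{1+10^{-p}}|\hat{x}^{(m)}_n|$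 for all $n=0,\dots,N$. The loss of significance rate is $\sigma(x_0,p):=\limsup_{N\to\infty}m_{min}(x_0,N,p)/N$. *)

From Stdlib Require Import Reals Lra Lia.
Open Scope R_scope.

Definition inD (a b x : R) : Prop := a <= x <= b.

Definition delta (K : R) (m : nat) : R :=
  K * (/ 2) ^ m / (1 - K * (/ 2) ^ m).

Definition setting_f (a b : R) (f : R -> R) : Prop :=
  a <= b /\ ~ (a <= 0 <= b) /\
  (forall x, inD a b x -> inD a b (f x)) /\
  (forall x, inD a b x -> forall eps, 0 < eps -> exists del, 0 < del /\
      forall y, inD a b y -> Rabs (y - x) < del -> Rabs (f y - f x) < eps) /\
  (exists f' : R -> R,
      (forall x, a < x < b -> derivable_pt_lim f x (f' x) /\ continuity_pt f' x) /\
      (exists B, forall x, a < x < b -> Rabs (f' x) <= B)).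

(* Computed orbits: xh m x0 n = \hat x^{(m)}_n for initial value x0,
   e m x0 n = \overline e^{(m)}_n, L m x0 n = \overline L^{(m)}_n. *)
Definition computed_orbits (a b K : R) (m0 : nat)
    (xh e L : nat -> R -> nat -> R) : Prop :=
  forall m x0, (m0 <= m)%nat -> inD a b x0 ->
    (forall n, inD a b (xh m x0 n)) /\
    (forall n, 0 <= L m x0 n) /\
    e m x0 0%nat = delta K m * Rabs (xh m x0 0%nat) /\
    (forall n, e m x0 (S n) = L m x0 n * e m x0 n + delta K m * Rabs (xh m x0 (S n))).

Definition accurate (xh e : nat -> R -> nat -> R) (x0 : R) (N : nat) (p : Z) (m : nat)
  : Prop :=
  forall n, (n <= N)%nat ->
    e m x0 n <= powerRZ 10 (- p) / (1 + powerRZ 10 (- p)) * Rabs (xh m x0 n).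

Definition is_m_min (m0 : nat) (xh e : nat -> R -> nat -> R) (x0 : R) (N : nat) (p : Z)
    (mm : nat) : Prop :=
  (m0 <= mm)%nat /\ accurate xh e x0 N p mm /\
  (forall m, (m0 <= m)%nat -> accurate xh e x0 N p m -> (mm <= m)%nat).

From Stdlib Require Import Reals Lra Lia Classical Wf_nat.
Open Scope R_scope.

(* On D the magnitudes |x| lie in [c, M] with c > 0 because 0 is not in D, and
   the linear error recursion gives e_n <= delta_m M (n+1) Lp^n with
   Lp = max(1, Lam).  Since delta_m <= 2 K 2^(-m) for large m, spending k extra
   mantissa bits per step, where 2^(-k) Lp <= 1/2, absorbs the factor
   (n+1) Lp^n; hence m = m1 + k N is accurate for an m1 independent of N and x0,
   and the least accurate mantissa length is at most m1 + k N. *)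

Definition rel_tolerance (p : Z) : R := powerRZ 10 (- p) / (1 + powerRZ 10 (- p)).

Lemma rel_tolerance_gt0 (p : Z) : 0 < rel_tolerance p.
Proof.
  unfold rel_tolerance.
  assert (0 < powerRZ 10 (- p)) by (apply powerRZ_lt; lra).
  apply Rdiv_lt_0_compat; lra.
Qed.

Lemma half_pow_le (eps : R) : 0 < eps -> exists j, (/ 2) ^ j <= eps.
Proof.
  intros Heps.
  destruct (pow_lt_1_zero (/ 2) ltac:(rewrite Rabs_right; lra) eps Heps) as [j Hj].
  exists j; specialize (Hj j (le_n j)).
  rewrite Rabs_right in Hj by (apply Rle_ge, pow_le; lra); lra.
Qed.

Lemma half_pow_bounds (n : nat) : 0 < (/ 2) ^ n <= 1.
Proof.
  split; [apply pow_lt; lra|].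
  rewrite <- (pow1 n); apply pow_incr; lra.
Qed.

Lemma INR_succ_le_pow2 (n : nat) : INR n + 1 <= 2 ^ n.
Proof.
  induction n as [|n IH]; [simpl; lra|].
  rewrite S_INR; simpl.
  assert (1 <= 2 ^ n) by (apply pow_R1_Rle; lra).
  lra.
Qed.

Lemma succ_mul_pow_le1 (q : R) (n : nat) : 0 <= q <= / 2 -> (INR n + 1) * q ^ n <= 1.
Proof.
  intros Hq.
  assert (Hqn : q ^ n <= / 2 ^ n) by (rewrite <- pow_inv; apply pow_incr; lra).
  assert (H2n : 0 < 2 ^ n) by (apply pow_lt; lra).
  pose proof (INR_succ_le_pow2 n); pose proof (pos_INR n).
  apply Rle_trans with ((INR n + 1) * / 2 ^ n).
  - apply Rmult_le_compat_l; lra.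
  - apply (Rmult_le_reg_r (2 ^ n)); [exact H2n|].
    rewrite Rmult_assoc, Rinv_l by lra; lra.
Qed.

Lemma abs_bounds_on_interval (a b : R) :
  a <= b -> ~ (a <= 0 <= b) ->
  exists c M, 0 < c /\ forall x, inD a b x -> c <= Rabs x <= M.
Proof.
  intros Hab H0; unfold inD.
  destruct (Rlt_or_le 0 a) as [Ha|Ha].
  - exists a, b; split; [lra|]; intros x Hx.
    rewrite Rabs_right by lra; lra.
  - assert (b < 0) by (destruct (Rlt_or_le b 0); [easy|exfalso; apply H0; lra]).
    exists (- b), (- a); split; [lra|]; intros x Hx.
    rewrite Rabs_left by lra; lra.
Qed.

Lemma delta_le_twice (K : R) (m : nat) :
  0 < K * (/ 2) ^ m <= / 2 -> 0 <= delta K m <= 2 * (K * (/ 2) ^ m).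
Proof.
  intros Ht; unfold delta; set (t := K * (/ 2) ^ m) in *.
  assert (Hd : t / (1 - t) * (1 - t) = t) by (field; lra).
  assert (0 <= t / (1 - t)) by (apply Rmult_le_pos; [lra|apply Rlt_le, Rinv_0_lt_compat; lra]).
  nra.
Qed.

Lemma linear_recurrence_bound (e L u : nat -> R) (d M Lp : R) :
  0 <= d -> 0 <= M -> 1 <= Lp ->
  (forall n, u n <= M) -> (forall n, 0 <= L n <= Lp) ->
  e 0%nat = d * u 0%nat ->
  (forall n, e (S n) = L n * e n + d * u (S n)) ->
  forall n, e n <= d * M * (INR n + 1) * Lp ^ n.
Proof.
  intros Hd HM HLp Hu HL He0 HeS n.
  induction n as [|n IH].
  - rewrite He0; simpl.
    assert (d * u 0%nat <= d * M) by (apply Rmult_le_compat_l; auto); lra.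
  - rewrite HeS, S_INR; simpl.
    destruct (HL n) as [HL0 HL1].
    set (B := d * M * (INR n + 1) * Lp ^ n) in IH.
    assert (HB : 0 <= B).
    { pose proof (pos_INR n); pose proof (pow_le Lp n ltac:(lra)).
      unfold B; repeat apply Rmult_le_pos; lra. }
    assert (L n * e n <= Lp * B)
      by (apply Rle_trans with (L n * B); [apply Rmult_le_compat_l|apply Rmult_le_compat_r]; lra).
    assert (d * u (S n) <= d * M) by (apply Rmult_le_compat_l; auto).
    assert (d * M <= d * M * (Lp * Lp ^ n)).
    { assert (1 <= Lp * Lp ^ n) by (change (1 <= Lp ^ S n); apply pow_R1_Rle; lra).
      rewrite <- (Rmult_1_r (d * M)) at 1.
      apply Rmult_le_compat_l; [apply Rmult_le_pos|]; lra. }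
    unfold B in *; nra.
Qed.

Lemma scaled_half_pow_eventually_le (K eps : R) (m0 : nat) :
  0 < eps -> exists m1, (m0 <= m1)%nat /\ forall m, (m1 <= m)%nat -> K * (/ 2) ^ m <= eps.
Proof.
  intros Heps.
  destruct (half_pow_le (eps / (Rabs K + 1))) as [j Hj].
  { apply Rdiv_lt_0_compat; [|pose proof (Rabs_pos K)]; lra. }
  exists (m0 + j)%nat; split; [lia|]; intros m Hm.
  assert (Hmj : (/ 2) ^ m <= (/ 2) ^ j).
  { replace m with (j + (m - j))%nat by lia; rewrite pow_add.
    pose proof (half_pow_bounds j); pose proof (half_pow_bounds (m - j)); nra. }
  pose proof (half_pow_bounds m); pose proof (Rabs_pos K); pose proof (Rle_abs K).
  assert (Hdiv : eps / (Rabs K + 1) * (Rabs K + 1) = eps) by (field; lra).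
  nra.
Qed.

Lemma error_budget_linear_mantissa (K M Lp : R) (m1 k N : nat) :
  0 <= K -> 0 <= M -> 0 <= Lp -> (/ 2) ^ k * Lp <= / 2 ->
  2 * (K * (/ 2) ^ (m1 + k * N)) * M * ((INR N + 1) * Lp ^ N) <= 2 * (K * (/ 2) ^ m1) * M.
Proof.
  intros HK HM HLp Hq.
  replace (2 * (K * (/ 2) ^ (m1 + k * N)) * M * ((INR N + 1) * Lp ^ N))
    with (2 * (K * (/ 2) ^ m1) * M * ((INR N + 1) * ((/ 2) ^ k * Lp) ^ N))
    by (rewrite pow_add, pow_mult, Rpow_mult_distr; ring).
  rewrite <- (Rmult_1_r (2 * (K * (/ 2) ^ m1) * M)) at 2.
  pose proof (half_pow_bounds m1); pose proof (half_pow_bounds k).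
  apply Rmult_le_compat_l; [repeat apply Rmult_le_pos; lra|].
  apply succ_mul_pow_le1; split; [apply Rmult_le_pos|]; lra.
Qed.

Section Accuracy.

Variables (a b K : R) (m0 : nat) (xh e L : nat -> R -> nat -> R).
Hypothesis orbits : computed_orbits a b K m0 xh e L.

Lemma accurate_of_error_budget (c M Lp x0 : R) (N : nat) (p : Z) (m : nat) :
  (m0 <= m)%nat -> inD a b x0 -> 1 <= Lp ->
  (forall x, inD a b x -> c <= Rabs x <= M) ->
  (forall n, L m x0 n <= Lp) ->
  0 < K * (/ 2) ^ m <= / 2 ->
  2 * (K * (/ 2) ^ m) * M * ((INR N + 1) * Lp ^ N) <= rel_tolerance p * c ->
  accurate xh e x0 N p m.
Proof.
  intros Hm Hx0 HLp Habs HLm Ht Hbudget n Hn.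
  destruct (orbits m x0 Hm Hx0) as (Hxh & HL0 & He0 & HeS).
  destruct (delta_le_twice K m Ht) as [Hd0 Hd].
  assert (Hc : c <= Rabs (xh m x0 n) <= M) by exact (Habs _ (Hxh n)).
  assert (HM : 0 <= M) by (pose proof (Rabs_pos (xh m x0 n)); lra).
  assert (He := linear_recurrence_bound (e m x0) (L m x0) (fun n => Rabs (xh m x0 n))
                  (delta K m) M Lp Hd0 HM HLp (fun n => proj2 (Habs _ (Hxh n)))
                  (fun n => conj (HL0 n) (HLm n)) He0 HeS n).
  assert (Hgrowth : (INR n + 1) * Lp ^ n <= (INR N + 1) * Lp ^ N).
  { pose proof (le_INR _ _ Hn); pose proof (pos_INR n).
    apply Rmult_le_compat; [lra|apply pow_le; lra|lra|apply Rle_pow; auto]. }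
  assert (0 <= (INR n + 1) * Lp ^ n)
    by (pose proof (pos_INR n); apply Rmult_le_pos; [lra|apply pow_le; lra]).
  assert (0 <= delta K m * M) by (apply Rmult_le_pos; lra).
  assert (e m x0 n <= 2 * (K * (/ 2) ^ m) * M * ((INR N + 1) * Lp ^ N)).
  { apply Rle_trans with (delta K m * M * ((INR N + 1) * Lp ^ N)).
    - rewrite Rmult_assoc in He; apply Rle_trans with (1 := He).
      apply Rmult_le_compat_l; assumption.
    - apply Rmult_le_compat_r; [lra|apply Rmult_le_compat_r; lra]. }
  assert (rel_tolerance p * c <= rel_tolerance p * Rabs (xh m x0 n))
    by (apply Rmult_le_compat_l; [apply Rlt_le, rel_tolerance_gt0|lra]).
  change (e m x0 n <= rel_tolerance p * Rabs (xh m x0 n)); lra.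
Qed.

End Accuracy.

Lemma is_m_min_exists_le (m0 : nat) (xh e : nat -> R -> nat -> R) (x0 : R) (N : nat)
    (p : Z) (m : nat) :
  (m0 <= m)%nat -> accurate xh e x0 N p m ->
  exists mm, is_m_min m0 xh e x0 N p mm /\ (mm <= m)%nat.
Proof.
  intros Hm Hacc.
  set (P := fun k => (m0 <= k)%nat /\ accurate xh e x0 N p k).
  assert (HP : exists k, P k) by (exists m; split; assumption).
  destruct (dec_inh_nat_subset_has_unique_least_element P (fun k => classic (P k)) HP)
    as (mm & [[Hmm0 Hmm] Hleast] & _).
  exists mm; split.
  - split; [exact Hmm0|split; [exact Hmm|]].
    intros k Hk Hacck; exact (Hleast k (conj Hk Hacck)).
  - exact (Hleast m (conj Hm Hacc)).
Qed.

Theorem mainTheorem5 :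
  forall (a b K : R) (m0 : nat) (Lam : R) (p : Z),
    a <= b -> ~ (a <= 0 <= b) ->
    0 < K -> (1 <= m0)%nat -> K * (/ 2) ^ m0 < 1 -> 0 <= Lam ->
    exists C1 C2 : R, 0 <= C1 /\ 0 <= C2 /\
      forall (f : R -> R) (xh e L : nat -> R -> nat -> R),
        setting_f a b f ->
        computed_orbits a b K m0 xh e L ->
        (forall m x0 n, (m0 <= m)%nat -> inD a b x0 -> L m x0 n <= Lam) ->
        forall (x0 : R) (N : nat), inD a b x0 ->
          exists mm : nat, is_m_min m0 xh e x0 N p mm /\
            INR mm <= C1 * INR N + C2.
Proof.
  intros a b K m0 Lam p Hab H0 HK _ _ HLam.
  set (Lp := Rmax 1 Lam).
  assert (HLp : 1 <= Lp /\ Lam <= Lp) by (split; [apply Rmax_l|apply Rmax_r]).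
  destruct (abs_bounds_on_interval a b Hab H0) as (c & M & Hc & Habs).
  assert (HM : c <= M) by (destruct (Habs b) as [Hb1 Hb2]; [unfold inD; lra|lra]).
  destruct (half_pow_le (/ (2 * Lp))) as [k Hk]; [apply Rinv_0_lt_compat; lra|].
  assert (Hq : (/ 2) ^ k * Lp <= / 2).
  { apply Rle_trans with (/ (2 * Lp) * Lp); [apply Rmult_le_compat_r; lra|].
    right; field; lra. }
  set (eps := Rmin (/ 2) (rel_tolerance p * c / (2 * M))).
  assert (Heps : 0 < eps /\ eps <= / 2 /\ 2 * eps * M <= rel_tolerance p * c).
  { pose proof (rel_tolerance_gt0 p).
    assert (Hr : eps <= rel_tolerance p * c / (2 * M)) by apply Rmin_r.
    assert (rel_tolerance p * c / (2 * M) * (2 * M) = rel_tolerance p * c) by (field; lra).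
    split; [apply Rmin_glb_lt; [|apply Rdiv_lt_0_compat; [apply Rmult_lt_0_compat|]]; lra|].
    split; [apply Rmin_l|]; nra. }
  destruct (scaled_half_pow_eventually_le K eps m0 (proj1 Heps)) as (m1 & Hm01 & Hm1).
  exists (INR k), (INR m1); split; [apply pos_INR|split; [apply pos_INR|]].
  intros f xh e L _ Horb HL x0 N Hx0.
  assert (Hacc : accurate xh e x0 N p (m1 + k * N)).
  { apply (accurate_of_error_budget a b K m0 xh e L Horb c M Lp); [lia|easy|lra|easy| | |].
    - intros n; apply Rle_trans with Lam; [apply HL; [lia|easy]|lra].
    - pose proof (half_pow_bounds (m1 + k * N)); pose proof (Hm1 (m1 + k * N)%nat ltac:(lia)).
      split; nra.
    - pose proof (error_budget_linear_mantissa K M Lp m1 k N ltac:(lra) ltac:(lra) ltac:(lra) Hq).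
      pose proof (Hm1 m1 (le_n m1)); nra. }
  destruct (is_m_min_exists_le m0 xh e x0 N p (m1 + k * N)) as (mm & Hmm & Hle); [lia|easy|].
  exists mm; split; [exact Hmm|].
  apply le_INR in Hle; rewrite plus_INR, mult_INR in Hle; lra.
Qed.
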